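(* For each $1\le i\le4$, the natural action of $PGL(W)\times PGL(R)$ on $\mathbf F_i$ is free on a nonempty open subset of $\mathbf F_i$.
   Context: Over $\mathbb C$, $V=H^0\mathcal O_{\mathbb P^3}(1)$, $\check V$ its dual, $R$ and $W$ vector spaces of dimensions $3$ and $4$, $\mathbf T=\mathbb P(\mathrm{Hom}(R\otimes V,W))$. $\mathbf F\subset\mathbf T\times\mathbb P(\mathrm{Hom}(W,\check V))\times\mathbb P(\mathrm{Hom}(\check V,W))$ is the subvariety of triples $(\varphi,\psi,\psi')$ such that the composite $R\otimes V\otimes V\to W\otimes V\to\check V\otimes V\to\mathbb C$ induced by $\varphi,\psi$ factors through $R\otimes S^2V$, the composite $R\otimes\check W\otimes\check W\to\check V\otimes\check W\to W\otimes\check W\to\mathbb C$ induced by $\varphi,\psi'$ factors through $R\otimes S^2\check W$, and $\psi'\psi=\lambda1_W$, $\psi\psi'=\mu1_{\check V}$ for some scalars. $\mathbf F_i$ ($1\le i\le3$) is the subset where $\mathrm{rk}\,\psi=i$, $\mathrm{rk}\,\psi'=4-i$; $\mathbf F_4$ is the open subset where $\psi$ is invertible. $PGL(R)$ acts by precomposition on $\varphi$, $PGL(W)$ by composition on $\varphi$, $\psi$ (via inverse) and $\psi'$. *)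

From HB Require Import structures.
From mathcomp Require Import all_boot all_order all_algebra.
From mathcomp Require Import reals.
From mathcomp Require Import complex.
From mathcomp Require mpoly.
Set Implicit Arguments. Unset Strict Implicit. Unset Printing Implicit Defensive.
Import GRing.Theory Num.Theory.
Local Open Scope ring_scope.

(* Coordinates (fixed bases):
   R = F^3 (basis e_r), V = F^4 (basis e_v), Vdual with dual basis e^v,
   W = F^4 (basis f_w).  Matrices act on ROW vectors (mathcomp convention).
   - phi : R (x) V -> W is given by phi r : 'M_4 (rows v, columns w),
           phi(e_r (x) e_v) = sum_w (phi r) v w f_w.
   - psi : W -> Vdual is a 'M_4 (rows w, columns v), psi f_w = sum_v psi w v e^v.
   - psi' : Vdual -> W is a 'M_4 (rows v, columns w).
   A point of T x P(Hom(W,Vdual)) x P(Hom(Vdual,W)) is represented by a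
   triple of nonzero representatives; all conditions below are invariant
   under rescaling of each component. *)

Definition triple (F : fieldType) := (('I_3 -> 'M[F]_4) * 'M[F]_4 * 'M[F]_4)%type.

Definition tphi (F : fieldType) (x : triple F) := x.1.1.
Definition tpsi (F : fieldType) (x : triple F) := x.1.2.
Definition tpsi' (F : fieldType) (x : triple F) := x.2.

Definition nonzero_rep (F : fieldType) (x : triple F) :=
  [/\ exists r, tphi x r != 0, tpsi x != 0 & tpsi' x != 0].

(* the defining conditions of F:
   - R (x) V (x) V -> C factors through R (x) S^2 V : each matrix
     (phi r) *m psi (entries sum_w phi_{r v w} psi_{w u}) is symmetric;
   - R (x) W^ (x) W^ -> C factors through R (x) S^2 W^ : each matrix
     (phi r)^T *m psi' (entries sum_v phi_{r v w} psi'_{v y}) is symmetric;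
   - psi' o psi = lambda 1_W   (matrix psi *m psi', row convention);
   - psi o psi' = mu 1_Vdual   (matrix psi' *m psi). *)
Definition inF (F : fieldType) (x : triple F) :=
  [/\ nonzero_rep x,
      forall r, (tphi x r *m tpsi x)^T = tphi x r *m tpsi x,
      forall r, ((tphi x r)^T *m tpsi' x)^T = (tphi x r)^T *m tpsi' x,
      exists lam : F, tpsi x *m tpsi' x = lam%:M
    & exists mu : F, tpsi' x *m tpsi x = mu%:M].

Definition in_stratum (F : fieldType) (i : nat) (x : triple F) :=
  inF x /\
  (if i == 4%N then tpsi x \in unitmx
   else (\rank (tpsi x) == i) && (\rank (tpsi' x) == (4 - i)%N)).

(* action of (h, g) in GL(W) x GL(R) on representatives:
   phi |-> h o phi o (g (x) 1),  psi |-> psi o h^-1,  psi' |-> h o psi'. *)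
Definition act (F : fieldType) (h : 'M[F]_4) (g : 'M[F]_3) (x : triple F) : triple F :=
  (fun r => (\sum_(s < 3) g r s *: tphi x s) *m h,
   invmx h *m tpsi x, tpsi' x *m h).

Definition proj_eq (F : fieldType) (x y : triple F) :=
  exists a b c : F, [/\ a != 0, b != 0 & c != 0] /\
    [/\ (forall r, tphi y r = a *: tphi x r), tpsi y = b *: tpsi x
       & tpsi' y = c *: tpsi' x].

Definition trivial_stabilizer (F : fieldType) (x : triple F) :=
  forall (h : 'M[F]_4) (g : 'M[F]_3), h \in unitmx -> g \in unitmx ->
    proj_eq (act h g x) x ->
    (exists a : F, h = a%:M) /\ (exists b : F, g = b%:M).

Definition coords (F : fieldType) (x : triple F) (k : 'I_80) : F :=
  if (k < 48)%N then
    tphi x (inord (k %/ 16)) (inord ((k %% 16) %/ 4)) (inord (k %% 4))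
  else if (k < 64)%N then
    tpsi x (inord ((k - 48) %/ 4)) (inord ((k - 48) %% 4))
  else tpsi' x (inord ((k - 64) %/ 4)) (inord ((k - 64) %% 4)).

Definition poly80 (F : fieldType) := mpoly.mpoly 80 F.
Definition peval (F : fieldType) (p : poly80 F) (x : triple F) : F := mpoly.meval (coords x) p.

Definition CC (R : realType) : fieldType := R[i].

From HB Require Import structures.
From mathcomp Require Import all_boot all_order all_algebra.
From mathcomp Require Import reals complex.
From mathcomp Require Import mpoly zify.
Set Implicit Arguments. Unset Strict Implicit. Unset Printing Implicit Defensive.
Import GRing.Theory.
Local Open Scope ring_scope.

(* If (h, g) fixes the point [(phi, psi, psi')], then psi ~ psi h^-1 gives
   h psi = b psi, so the matrices Q_s = phi_s psi satisfy
   Q_r = a b sum_s g_rs Q_s.  When the Q_s are linearly independent, which is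
   certified by a nonzero 3x3 minor of their entries, this forces g to be
   scalar, and then an invertible phi_0 forces h to be scalar as well.  The
   open set is thus the non-vanishing locus of det(phi_0) times that minor.
   On F_1, psi has rank one and the symmetric products phi_s psi are all
   proportional, so one uses instead the matrices psi'^T phi_s = phi_s^T psi',
   on which h acts by a scalar too.
   Each locus meets its stratum at the point phi_0 = 1, phi_1 = E_pq + E_qp,
   phi_2 = E_qq, psi = diag(1^i, 0^(4-i)), psi' = diag(0^i, 1^(4-i))
   (psi' = 1 when i = 4). *)

Definition entry_minor (T : Type) (n k l : nat) (Q : 'I_n -> 'M[T]_(k, l))
    (pos : 'I_n -> 'I_k * 'I_l) : 'M[T]_n :=
  \matrix_(s, j) Q s (pos j).1 (pos j).2.

Section EntryMinor.
Variables (F : fieldType) (n k l : nat) (Q : 'I_n -> 'M[F]_(k, l)).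
Variable pos : 'I_n -> 'I_k * 'I_l.
Hypothesis minor_neq0 : \det (entry_minor Q pos) != 0.

Lemma entry_minor_free (c : 'I_n -> F) :
  \sum_s c s *: Q s = 0 -> forall s, c s = 0.
Proof.
move=> sum0.
have unitN : entry_minor Q pos \in unitmx by rewrite unitmxE unitfE.
have cN0 : \row_s c s *m entry_minor Q pos = 0.
  apply/matrixP => i j; rewrite mxE [RHS]mxE.
  transitivity ((\sum_s c s *: Q s) (pos j).1 (pos j).2); last by rewrite sum0 mxE.
  by rewrite summxE; apply: eq_bigr => s _; rewrite !mxE.
move=> s; have /matrixP/(_ 0 s) := mulmxK unitN (\row_s c s).
by rewrite cN0 mul0mx !mxE.
Qed.

Lemma entry_minor_coef_delta (c : 'I_n -> 'I_n -> F) :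
  (forall r, Q r = \sum_s c r s *: Q s) -> forall r s, c r s = (r == s)%:R.
Proof.
move=> Qc r s; apply/eqP; rewrite -subr_eq0; apply/eqP; move: s.
apply: entry_minor_free; under eq_bigr do rewrite scalerBl.
rewrite sumrB -Qc (bigD1 r) //= eqxx scale1r big1 ?addr0 ?subrr //.
by move=> s /negbTE sr; rewrite eq_sym sr scale0r.
Qed.

End EntryMinor.

Lemma scalar_of_stabilized_family (F : fieldType) (n m k l : nat)
    (phi : 'I_n.+1 -> 'M[F]_m) (Q : 'I_n.+1 -> 'M[F]_(k, l))
    (pos : 'I_n.+1 -> 'I_k * 'I_l) (h : 'M[F]_m) (g : 'M[F]_n.+1) (a kappa : F) :
  \det (phi 0) != 0 -> \det (entry_minor Q pos) != 0 ->
  (forall r, phi r = a *: ((\sum_s g r s *: phi s) *m h)) ->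
  (forall r, Q r = \sum_s (a * kappa * g r s) *: Q s) ->
  (exists b, h = b%:M) /\ (exists b, g = b%:M).
Proof.
move=> det_phi0 minor_neq0 phiE QE.
have g_delta := entry_minor_coef_delta minor_neq0 QE.
have akappa0 : a * kappa != 0.
  apply/eqP => akappa0; have := g_delta 0 0.
  by rewrite akappa0 mul0r eqxx => /esym/eqP; rewrite oner_eq0.
have gE r s : g r s = (a * kappa)^-1 * (r == s)%:R.
  by rewrite -g_delta mulrA mulVf ?mul1r.
have sum_gE r : \sum_s g r s *: phi s = (a * kappa)^-1 *: phi r.
  rewrite (bigD1 r) //= big1 ?addr0 => [|s /negbTE sr]; rewrite gE.
    by rewrite eqxx mulr1.
  by rewrite eq_sym sr mulr0 scale0r.
split; last by exists (a * kappa)^-1; apply/matrixP => r s; rewrite gE !mxE mulr_natr.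
have unit_phi0 : phi 0 \in unitmx by rewrite unitmxE unitfE.
have phi0h : phi 0 *m h = phi 0 *m kappa%:M.
  rewrite mul_mx_scalar {2}(phiE 0) sum_gE -scalemxAl !scalerA.
  by rewrite mulrA [kappa * a]mulrC divff ?scale1r.
by exists kappa; rewrite -(mulKmx unit_phi0 h) phi0h mulKmx.
Qed.

Lemma trivial_stabilizer_phi_psi (F : fieldType) (x : triple F) pos :
  \det (tphi x 0) != 0 ->
  \det (entry_minor (fun s => tphi x s *m tpsi x) pos) != 0 ->
  trivial_stabilizer x.
Proof.
move=> det_phi0 minor_neq0 h g unit_h _ [a [b [c [_ [phiE psiE _]]]]].
apply: (scalar_of_stabilized_family (kappa := b) det_phi0 minor_neq0 phiE) => r.
have hpsi : h *m tpsi x = b *: tpsi x.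
  by rewrite {1}psiE /= -scalemxAr mulmxA mulmxV // mul1mx.
rewrite {1}(phiE r) /= -scalemxAl -mulmxA hpsi mulmx_suml scaler_sumr.
by apply: eq_bigr => s _; rewrite -!scalemxAl -scalemxAr !scalerA mulrAC.
Qed.

Lemma trivial_stabilizer_psi'_phi (F : fieldType) (x : triple F) pos :
  (forall r, ((tphi x r)^T *m tpsi' x)^T = (tphi x r)^T *m tpsi' x) ->
  \det (tphi x 0) != 0 ->
  \det (entry_minor (fun s => (tpsi' x)^T *m tphi x s) pos) != 0 ->
  trivial_stabilizer x.
Proof.
move=> sym det_phi0 minor_neq0 h g _ _ [a [b [c [[_ _ c0] [phiE _ psi'E]]]]].
apply: (scalar_of_stabilized_family (kappa := c^-1) det_phi0 minor_neq0 phiE) => r.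
have psi'h : tpsi' x *m h = c^-1 *: tpsi' x.
  by rewrite {2}psi'E /= scalerA mulVf // scale1r.
(* symmetry rewrites psi'^T phi_s as phi_s^T psi', and psi' h = c^-1 psi' *)
have Qh s : (tpsi' x)^T *m tphi x s *m h = c^-1 *: ((tpsi' x)^T *m tphi x s).
  by rewrite -[_^T *m _]trmxK trmx_mul trmxK sym -mulmxA psi'h scalemxAr.
rewrite {1}(phiE r) /= -scalemxAr mulmxA mulmx_sumr mulmx_suml scaler_sumr.
by apply: eq_bigr => s _; rewrite -scalemxAr -scalemxAl Qh !scalerA mulrAC.
Qed.

Definition phi_index (r : 'I_3) (v w : 'I_4) : 'I_80 := inord (r * 16 + v * 4 + w).
Definition psi_index (v w : 'I_4) : 'I_80 := inord (48 + v * 4 + w).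
Definition psi'_index (v w : 'I_4) : 'I_80 := inord (64 + v * 4 + w).

Lemma divmod4 (v w : 'I_4) : ((v * 4 + w) %/ 4 = v /\ (v * 4 + w) %% 4 = w)%N.
Proof. by rewrite divnMDl // modnMDl !(divn_small, modn_small) ?addn0. Qed.

Section Coordinates.
Variables (F : fieldType) (x : triple F).

Lemma coords_phi_index r v w : coords x (phi_index r v w) = tphi x r v w.
Proof.
have hr := ltn_ord r; have hv := ltn_ord v; have hw := ltn_ord w.
rewrite /coords /phi_index inordK; last by lia.
have -> : (r * 16 + v * 4 + w < 48)%N by lia.
have -> : ((r * 16 + v * 4 + w) %/ 16 = r)%N by lia.
have -> : (((r * 16 + v * 4 + w) %% 16) %/ 4 = v)%N by lia.
have -> : ((r * 16 + v * 4 + w) %% 4 = w)%N by lia.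
by rewrite !inord_val.
Qed.

Lemma coords_psi_index v w : coords x (psi_index v w) = tpsi x v w.
Proof.
have hv := ltn_ord v; have hw := ltn_ord w.
rewrite /coords /psi_index inordK; last by lia.
have -> : (48 + v * 4 + w < 48)%N = false by lia.
have -> : (48 + v * 4 + w < 64)%N by lia.
by rewrite -addnA addKn; case: (divmod4 v w) => -> ->; rewrite !inord_val.
Qed.

Lemma coords_psi'_index v w : coords x (psi'_index v w) = tpsi' x v w.
Proof.
have hv := ltn_ord v; have hw := ltn_ord w.
rewrite /coords /psi'_index inordK; last by lia.
have -> : (64 + v * 4 + w < 48)%N = false by lia.
have -> : (64 + v * 4 + w < 64)%N = false by lia.
by rewrite -addnA addKn; case: (divmod4 v w) => -> ->; rewrite !inord_val.
Qed.

End Coordinates.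

Section GenericMatrices.
Variable F : fieldType.

Definition phiX (r : 'I_3) : 'M[poly80 F]_4 := \matrix_(v, w) 'X_(phi_index r v w).
Definition psiX : 'M[poly80 F]_4 := \matrix_(v, w) 'X_(psi_index v w).
Definition psi'X : 'M[poly80 F]_4 := \matrix_(v, w) 'X_(psi'_index v w).

Variable x : triple F.
Local Notation ev := (mpoly.meval (coords x)).

Lemma map_phiX r : map_mx ev (phiX r) = tphi x r.
Proof. by apply/matrixP => v w; rewrite !mxE mevalXU coords_phi_index. Qed.

Lemma map_psiX : map_mx ev psiX = tpsi x.
Proof. by apply/matrixP => v w; rewrite !mxE mevalXU coords_psi_index. Qed.

Lemma map_psi'X : map_mx ev psi'X = tpsi' x.
Proof. by apply/matrixP => v w; rewrite !mxE mevalXU coords_psi'_index. Qed.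

Lemma peval_det_entry_minor (Q : 'I_3 -> 'M[poly80 F]_4) (Qx : 'I_3 -> 'M[F]_4) pos :
  (forall s, map_mx ev (Q s) = Qx s) ->
  peval (\det (phiX 0) * \det (entry_minor Q pos)) x =
  \det (tphi x 0) * \det (entry_minor Qx pos).
Proof.
move=> QxE; rewrite /peval rmorphM -!det_map_mx map_phiX; congr (_ * \det _).
by apply/matrixP => s j; rewrite !mxE -QxE mxE.
Qed.

End GenericMatrices.

Definition minor_poly_phi_psi (F : fieldType) pos : poly80 F :=
  \det (phiX F 0) * \det (entry_minor (fun s => phiX F s *m psiX F) pos).
Definition minor_poly_psi'_phi (F : fieldType) pos : poly80 F :=
  \det (phiX F 0) * \det (entry_minor (fun s => (psi'X F)^T *m phiX F s) pos).

Lemma peval_minor_poly_phi_psi (F : fieldType) pos (x : triple F) :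
  peval (minor_poly_phi_psi F pos) x =
  \det (tphi x 0) * \det (entry_minor (fun s => tphi x s *m tpsi x) pos).
Proof. by apply: peval_det_entry_minor => s; rewrite map_mxM map_phiX map_psiX. Qed.

Lemma peval_minor_poly_psi'_phi (F : fieldType) pos (x : triple F) :
  peval (minor_poly_psi'_phi F pos) x =
  \det (tphi x 0) * \det (entry_minor (fun s => (tpsi' x)^T *m tphi x s) pos).
Proof. by apply: peval_det_entry_minor => s; rewrite map_mxM -map_trmx map_phiX map_psi'X. Qed.

Lemma det_upper_unitriangular (R : comNzRingType) n (N : 'M[R]_n) :
  (forall s j : 'I_n, (j < s)%N -> N s j = 0) -> (forall s, N s s = 1) -> \det N = 1.
Proof.
move=> N_upper N_diag; rewrite -det_tr det_trig.
  by rewrite big1 // => s _; rewrite mxE N_diag.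
by apply/is_trig_mxP => s j js; rewrite mxE N_upper.
Qed.

Section Witness.
Variable F : fieldType.

Lemma mulmx_pid_entry m n (A : 'M[F]_(m, n)) i u v :
  (A *m pid_mx i) u v = A u v * (v < i)%:R.
Proof.
rewrite mxE (bigD1 v) //= big1 ?addr0 => [|w /negbTE wv]; rewrite mxE.
  by rewrite eqxx.
by rewrite (inj_eq val_inj) wv mulr0.
Qed.

Lemma mulmx_copid_entry m n (A : 'M[F]_(m, n)) i u v :
  (A *m copid_mx i) u v = A u v * (i <= v)%:R.
Proof.
rewrite /copid_mx mulmxBr mulmx1 mxE mxE mulmx_pid_entry.
by case: ltnP; rewrite ?mulr1 ?mulr0 ?subrr ?subr0.
Qed.

Definition witness_phi (p q : 'I_4) (r : 'I_3) : 'M[F]_4 :=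
  if r == 0 then 1%:M
  else if r == 1 then delta_mx p q + delta_mx q p else delta_mx q q.

Definition witness_pos (p q : 'I_4) (j : 'I_3) : 'I_4 * 'I_4 :=
  if j == 0 then (p, p) else if j == 1 then (p, q) else (q, q).

(* {p, q} lies in the support of psi, except for i = 1 where it lies in that
   of psi'. *)
Definition witness (i : nat) : triple F :=
  match i with
  | 1%N => (witness_phi 1 2, pid_mx 1, copid_mx 1)
  | 4%N => (witness_phi 0 1, pid_mx 4, copid_mx 0)
  | _ => (witness_phi 0 1, pid_mx i, copid_mx i)
  end.

Ltac entry_cases r u v :=
  case: r => [[|[|[|?]]] ?] //; case: u => [[|[|[|[|?]]]] ?] //;
  case: v => [[|[|[|[|?]]]] ?] //=; rewrite !mxE /=;
  rewrite ?mulr0 ?mul0r ?mulr1 ?mul1r ?addr0 ?add0r.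

Lemma witness_phi_psi_sym i : (1 <= i <= 4)%N -> forall r,
  (tphi (witness i) r *m tpsi (witness i))^T = tphi (witness i) r *m tpsi (witness i).
Proof.
move=> /andP[]; case: i => [|[|[|[|[|i]]]]] // _ _ r; apply/matrixP => u v;
  by rewrite /= mxE !mulmx_pid_entry /witness_phi; entry_cases r u v.
Qed.

Lemma witness_phi_psi'_sym i : (1 <= i <= 4)%N -> forall r,
  ((tphi (witness i) r)^T *m tpsi' (witness i))^T =
  (tphi (witness i) r)^T *m tpsi' (witness i).
Proof.
move=> /andP[]; case: i => [|[|[|[|[|i]]]]] // _ _ r; apply/matrixP => u v;
  by rewrite /= mxE !mulmx_copid_entry /witness_phi; entry_cases r u v.
Qed.

Lemma witness_minor_phi_psi i : (2 <= i <= 4)%N ->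
  \det (entry_minor (fun s => tphi (witness i) s *m tpsi (witness i))
    (witness_pos 0 1)) = 1.
Proof.
move=> /andP[]; case: i => [|[|[|[|[|i]]]]] // _ _;
  apply: det_upper_unitriangular => [s j|s];
  rewrite mxE /= mulmx_pid_entry /tphi /witness_phi /witness_pos /=;
  case: s => [[|[|[|?]]] ?] //; try case: j => [[|[|[|?]]] ?] //= _;
  by rewrite !mxE /= ?mulr0 ?mul0r ?mulr1 ?addr0.
Qed.

Lemma witness_minor_psi'_phi :
  \det (entry_minor (fun s => (tpsi' (witness 1))^T *m tphi (witness 1) s)
    (witness_pos 1 2)) = 1.
Proof.
apply: det_upper_unitriangular => [s j|s];
  rewrite mxE /= -[_^T *m _]trmxK trmx_mul trmxK mxE mulmx_copid_entry;
  rewrite /tphi /witness_phi /witness_pos /=;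
  case: s => [[|[|[|?]]] ?] //; try case: j => [[|[|[|?]]] ?] //= _;
  by rewrite !mxE /= ?mulr0 ?mul0r ?mulr1 ?addr0.
Qed.

Lemma witness_phi0 i : tphi (witness i) 0 = 1%:M.
Proof. by case: i => [|[|[|[|[|i]]]]]. Qed.

Lemma witness_in_stratum_lt4 i : (1 <= i < 4)%N -> in_stratum i (witness i).
Proof.
move=> i13; have i14 : (1 <= i <= 4)%N by case/andP: i13 => -> /ltnW.
have [psiE psi'E] : tpsi (witness i) = pid_mx i /\ tpsi' (witness i) = copid_mx i.
  by case/andP: i13; case: i {i14} => [|[|[|[|i]]]].
have [i_gt0 i_le4] := andP i14; have i_lt4 := (andP i13).2.
split; last by rewrite ltn_eqF // psiE psi'E rank_pid_mx ?rank_copid_mx ?eqxx.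
split; [split|exact: witness_phi_psi_sym|exact: witness_phi_psi'_sym|..].
- by exists 0; rewrite witness_phi0; exact: oner_neq0.
- by rewrite psiE -mxrank_eq0 rank_pid_mx // -lt0n.
- by rewrite psi'E -mxrank_eq0 rank_copid_mx // subn_eq0 -ltnNge.
- by exists 0; rewrite psiE psi'E mul_pid_mx_copid // -scalemx1 scale0r.
- by exists 0; rewrite psiE psi'E mul_copid_mx_pid // -scalemx1 scale0r.
Qed.

Lemma witness4_in_stratum : in_stratum 4 (witness 4).
Proof.
have copid0 : copid_mx 0 = 1%:M :> 'M[F]_4 by rewrite /copid_mx pid_mx_0 subr0.
split; last by rewrite /= pid_mx_1 unitmx1.
split; [split|exact: witness_phi_psi_sym|exact: witness_phi_psi'_sym|..].
- by exists 0; rewrite witness_phi0; exact: oner_neq0.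
all: rewrite /tpsi /tpsi' /= ?pid_mx_1 ?copid0 ?mulmx1.
- exact: oner_neq0.
- exact: oner_neq0.
- by exists 1.
- by exists 1.
Qed.

Lemma witness_in_stratum i : (1 <= i <= 4)%N -> in_stratum i (witness i).
Proof.
case/andP=> i_gt0; rewrite leq_eqVlt => /predU1P[-> | i_lt4].
  exact: witness4_in_stratum.
by apply: witness_in_stratum_lt4; rewrite i_gt0.
Qed.

End Witness.

Definition stratum_poly (F : fieldType) (i : nat) : poly80 F :=
  if i == 1%N then minor_poly_psi'_phi F (witness_pos 1 2)
  else minor_poly_phi_psi F (witness_pos 0 1).

Lemma trivial_stabilizer_of_stratum_poly (F : fieldType) i (x : triple F) :
  inF x -> peval (stratum_poly F i) x != 0 -> trivial_stabilizer x.
Proof.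
case=> _ _ sym _ _; rewrite /stratum_poly; case: ifP => _.
  rewrite peval_minor_poly_psi'_phi mulf_eq0 negb_or => /andP[det_phi0 minor_neq0].
  exact: trivial_stabilizer_psi'_phi sym det_phi0 minor_neq0.
rewrite peval_minor_poly_phi_psi mulf_eq0 negb_or => /andP[det_phi0 minor_neq0].
exact: trivial_stabilizer_phi_psi det_phi0 minor_neq0.
Qed.

Lemma peval_stratum_poly_witness (F : fieldType) i : (1 <= i <= 4)%N ->
  peval (stratum_poly F i) (witness F i) != 0.
Proof.
have det_phi0 : \det (tphi (witness F i) 0) = 1 by rewrite witness_phi0 det1.
case/andP; rewrite /stratum_poly; case: i det_phi0 => [|[|[|[|[|i]]]]] // det_phi0 _ _.
  by rewrite peval_minor_poly_psi'_phi det_phi0 witness_minor_psi'_phi mulr1 oner_neq0.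
all: by rewrite peval_minor_poly_phi_psi det_phi0 witness_minor_phi_psi // mulr1 oner_neq0.
Qed.

Theorem mainTheorem8 (R : realType) (i : nat) :
  (1 <= i <= 4)%N ->
  exists p : poly80 (CC R),
    (exists x : triple (CC R), in_stratum i x /\ peval p x != 0) /\
    (forall x : triple (CC R), in_stratum i x -> peval p x != 0 ->
       trivial_stabilizer x).
Proof.
move=> i14; exists (stratum_poly (CC R) i); split.
  exists (witness (CC R) i); split; first exact: witness_in_stratum.
  exact: peval_stratum_poly_witness.
by move=> x [xF _]; apply: trivial_stabilizer_of_stratum_poly.
Qed.
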